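(* Let $T$ be a tree in which every element has at most countably many immediate successors. Then $T$ with the fine wedge topology is suborderable, i.e. homeomorphic to a subspace of a linearly ordered topological space.
   Context: A tree is a partially ordered set in which the set of predecessors of each element is well-ordered. $y$ is an immediate successor of $x$ if $x<y$ and there is no $z$ with $x<z<y$. For $t\in T$, $V_t=\{s\in T:s\ge t\}$. The fine wedge topology on $T$ has as subbase all sets $V_t$ and their complements $T\setminus V_t$. *)

From Stdlib Require Import List.

Set Implicit Arguments.

Section Trees.
Variable T : Type.
Variable le : T -> T -> Prop.

Definition lt (x y : T) : Prop := le x y /\ x <> y.

Definition partial_order : Prop :=
  (forall x, le x x) /\
  (forall x y, le x y -> le y x -> x = y) /\
  (forall x y z, le x y -> le y z -> le x z).

Definition well_ordered_subset (S : T -> Prop) : Prop :=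
  (forall x y, S x -> S y -> le x y \/ le y x) /\
  (forall A : T -> Prop, (forall x, A x -> S x) -> (exists x, A x) ->
     exists m, A m /\ forall x, A x -> le m x).

Definition is_tree : Prop :=
  partial_order /\ forall t, well_ordered_subset (fun s => lt s t).

Definition immediate_successor (x y : T) : Prop :=
  lt x y /\ ~ exists z, lt x z /\ lt z y.

Definition wedge (t : T) : T -> Prop := fun s => le t s.

Definition fine_wedge_subbasic (U : T -> Prop) : Prop :=
  exists t, (forall s, U s <-> wedge t s) \/ (forall s, U s <-> ~ wedge t s).
End Trees.

Definition generated_open (X : Type) (B : (X -> Prop) -> Prop)
  (U : X -> Prop) : Prop :=
  forall x, U x -> exists l : list (X -> Prop),
    (forall W, In W l -> B W /\ W x) /\
    (forall y, (forall W, In W l -> W y) -> U y).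

Definition countable_set (X : Type) (S : X -> Prop) : Prop :=
  exists f : X -> nat, forall x y, S x -> S y -> f x = f y -> x = y.

Definition strict_linear_order (L : Type) (ltL : L -> L -> Prop) : Prop :=
  (forall x, ~ ltL x x) /\
  (forall x y z, ltL x y -> ltL y z -> ltL x z) /\
  (forall x y, ltL x y \/ x = y \/ ltL y x).

Definition open_ray (L : Type) (ltL : L -> L -> Prop) (V : L -> Prop) : Prop :=
  exists a, (forall y, V y <-> ltL y a) \/ (forall y, V y <-> ltL a y).

Definition order_open (L : Type) (ltL : L -> L -> Prop) :=
  generated_open (open_ray ltL).

Definition embedding (X L : Type) (openX : (X -> Prop) -> Prop)
  (openL : (L -> Prop) -> Prop) (f : X -> L) : Prop :=
  (forall x y, f x = f y -> x = y) /\
  (forall U : X -> Prop,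
     openX U <-> exists V, openL V /\ forall x, U x <-> V (f x)).

Definition suborderable (X : Type) (openX : (X -> Prop) -> Prop) : Prop :=
  exists (L : Type) (ltL : L -> L -> Prop) (f : X -> L),
    strict_linear_order ltL /\ embedding openX (order_open ltL) f.

Definition fine_wedge_open (T : Type) (le : T -> T -> Prop) :=
  generated_open (fine_wedge_subbasic le).

(* Let L = T x {Lo, Mid, Hi} and send x to (x, Mid).  The subtree V_x is laid
   out in the interval between (x, Lo) and (x, Hi), with (x, Mid) as its
   leftmost point after (x, Lo); incomparable nodes are ordered by comparing
   the two siblings at which their branches split.  The immediate successors
   of x are put in order type omega* (by decreasing index in an enumeration),
   so every interval [(x, Mid), b) contains all but finitely many subtrees
   V_c of children c of x.  Since (x, Lo) is the immediate predecessor of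
   (x, Mid), these intervals form a neighbourhood base of (x, Mid) in L, and
   they trace on T exactly the basic fine wedge neighbourhoods
   V_x \ (V_c1 u ... u V_cn) of x. *)

From Pilot Require Import Defs.
From Stdlib Require Import List Arith Lia Classical ClassicalEpsilon.
From mathcomp Require ssreflect ssrbool eqtype boolp wochoice.
Set Bullet Behavior "Strict Subproofs".
Set Implicit Arguments.

Section WellOrdering.
Import ssreflect ssrbool eqtype boolp wochoice.

Lemma exists_strict_linear_order (T : Type) :
  exists R : T -> T -> Prop, strict_linear_order R.
Proof.
have [R Rwo] := well_ordering_principle {classic T}.
have Rchain : wo_chain R predT by apply: withinW.
have Rtotal := wo_chainW Rchain.
have Ranti := wo_chain_antisymmetric Rchain.
exists (fun x y => x <> y /\ R x y); split; [|split].
- by move=> x [].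
- move=> x y z [nxy Rxy] [nyz Ryz]; split=> [exz|].
    by subst z; apply: nxy; apply: Ranti; rewrite ?inE ?Rxy.
  have [|m [[+ lb] _]] := Rwo [pred w : {classic T} | [|| w == x, w == y | w == z]].
    by exists x; rewrite inE eqxx.
  rewrite inE => /or3P[] /eqP mE; subst m.
  + by apply: lb; rewrite inE eqxx !orbT.
  + by case: nxy; apply: Ranti; rewrite // Rxy lb // inE eqxx.
  + by case: nyz; apply: Ranti; rewrite // Ryz lb // inE eqxx !orbT.
- move=> x y; case: (pselect (x = y)) => [|nxy]; first by right; left.
  case/orP: (Rtotal x y isT isT) => ?; [left|right; right]; split=> //.
  by move=> yx; apply: nxy; rewrite yx.
Qed.
End WellOrdering.

Section SubbasicNeighbourhoods.
Variables (X : Type) (B : (X -> Prop) -> Prop) (x : X).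

Definition subbasic_nbhd (S : X -> Prop) : Prop :=
  exists l : list (X -> Prop),
    (forall W, In W l -> B W /\ W x) /\ (forall y, (forall W, In W l -> W y) -> S y).

Lemma subbasic_nbhdT : subbasic_nbhd (fun _ => True).
Proof. exists nil; split; [intros W []|auto]. Qed.

Lemma subbasic_nbhd_subbasic W : B W -> W x -> subbasic_nbhd W.
Proof.
  intros BW Wx; exists (W :: nil); split.
  - intros W' [<-|[]]; auto.
  - intros y Hy; apply Hy; left; reflexivity.
Qed.

Lemma subbasic_nbhd_mono S S' :
  (forall y, S y -> S' y) -> subbasic_nbhd S -> subbasic_nbhd S'.
Proof. intros SS' [l [Hl HS]]; exists l; split; auto. Qed.

Lemma subbasic_nbhdI S S' :
  subbasic_nbhd S -> subbasic_nbhd S' -> subbasic_nbhd (fun y => S y /\ S' y).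
Proof.
  intros [l [Hl HS]] [l' [Hl' HS']]; exists (l ++ l'); split.
  - intros W HW; destruct (in_app_or _ _ _ HW); auto.
  - intros y Hy; split; [apply HS|apply HS']; intros W HW; apply Hy, in_or_app; auto.
Qed.

Lemma subbasic_nbhd_in_filter (N : (X -> Prop) -> Prop) :
  N (fun _ => True) ->
  (forall S S', (forall y, S y -> S' y) -> N S -> N S') ->
  (forall S S', N S -> N S' -> N (fun y => S y /\ S' y)) ->
  (forall W, B W -> W x -> N W) ->
  forall S, subbasic_nbhd S -> N S.
Proof.
  intros NT Nmono NI NB S [l [Hl HS]].
  apply Nmono with (fun y => forall W, In W l -> W y); [exact HS|].
  clear HS; induction l as [|W l IH].
  - apply Nmono with (fun _ => True); [intros y _ W []|exact NT].
  - apply Nmono with (fun y => W y /\ forall W', In W' l -> W' y).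
    + intros y [Wy Hy] W' [<-|HW']; [exact Wy|exact (Hy W' HW')].
    + apply NI.
      * apply NB; apply Hl; left; reflexivity.
      * apply IH; intros W' HW'; apply Hl; right; exact HW'.
Qed.
End SubbasicNeighbourhoods.

Section OrderTopology.
Variables (L : Type) (ltL : L -> L -> Prop).
Hypothesis ltL_linear : strict_linear_order ltL.

Definition right_nbhd (lo p : L) (S : L -> Prop) : Prop :=
  exists b, ltL p b /\ forall q, ltL lo q -> ltL q b -> S q.

Lemma right_nbhd_mono lo p S S' :
  (forall q, S q -> S' q) -> right_nbhd lo p S -> right_nbhd lo p S'.
Proof. intros SS' [b [pb Hb]]; exists b; split; auto. Qed.

Lemma right_nbhdT lo p p' : ltL p p' -> right_nbhd lo p (fun _ => True).
Proof. intros pp'; exists p'; auto. Qed.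

Lemma right_nbhdI lo p S S' :
  right_nbhd lo p S -> right_nbhd lo p S' -> right_nbhd lo p (fun q => S q /\ S' q).
Proof.
  destruct ltL_linear as [_ [ltL_trans ltL_total]].
  intros [b [pb Hb]] [b' [pb' Hb']].
  destruct (ltL_total b b') as [bb'|[<-|b'b]].
  - exists b; split; [exact pb|]; intros q loq qb; split; eauto.
  - exists b; split; [exact pb|]; auto.
  - exists b'; split; [exact pb'|]; intros q loq qb'; split; eauto.
Qed.

Lemma order_open_of_intervals V :
  (forall q, V q -> exists a b, ltL a q /\ ltL q b /\
     forall r, ltL a r -> ltL r b -> V r) ->
  order_open ltL V.
Proof.
  intros HV q Vq; destruct (HV q Vq) as [a [b [aq [qb Hab]]]].
  exists ((fun r => ltL a r) :: (fun r => ltL r b) :: nil); split.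
  - intros W [<-|[<-|[]]]; split; auto.
    + exists a; right; tauto.
    + exists b; left; tauto.
  - intros r Hr; apply Hab.
    + apply (Hr _ (or_introl eq_refl)).
    + apply Hr; right; left; reflexivity.
Qed.

Lemma order_open_right_nbhd {lo p p'} V :
  ~ (exists q, ltL lo q /\ ltL q p) -> ltL p p' ->
  order_open ltL V -> V p -> right_nbhd lo p V.
Proof.
  destruct ltL_linear as [_ [ltL_trans ltL_total]].
  intros lo_adj pp' HV Vp.
  apply (@subbasic_nbhd_in_filter _ (open_ray ltL) p (right_nbhd lo p)).
  - exact (right_nbhdT lo pp').
  - intros S S' SS'; apply right_nbhd_mono; exact SS'.
  - apply right_nbhdI.
  - intros W [a [HW|HW]] Wp; apply HW in Wp.
    + exists a; split; [exact Wp|]; intros q _ qa; apply HW; exact qa.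
    + exists p'; split; [exact pp'|]; intros q loq _; apply HW.
      destruct (ltL_total a lo) as [alo|[<-|loa]]; eauto.
      exfalso; apply lo_adj; eauto.
  - exact (HV p Vp).
Qed.
End OrderTopology.

Inductive tag := Lo | Mid | Hi.

Definition tag_rank (e : tag) : nat :=
  match e with Lo => 0 | Mid => 1 | Hi => 2 end.

Definition tag_lt (e f : tag) : Prop := tag_rank e < tag_rank f.

Lemma tag_lt_irrefl e : ~ tag_lt e e.
Proof. unfold tag_lt; lia. Qed.

Lemma tag_lt_trans e f g : tag_lt e f -> tag_lt f g -> tag_lt e g.
Proof. unfold tag_lt; lia. Qed.

Lemma tag_lt_total e f : tag_lt e f \/ e = f \/ tag_lt f e.
Proof. unfold tag_lt; destruct e, f; simpl; auto with arith. Qed.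

Lemma tag_lt_Hi e : e <> Hi -> tag_lt e Hi.
Proof. unfold tag_lt; destruct e; simpl; auto with arith; congruence. Qed.

Lemma Hi_not_tag_lt f : ~ tag_lt Hi f.
Proof. unfold tag_lt; destruct f; simpl; lia. Qed.

Section Tree.
Variables (T : Type) (le : T -> T -> Prop).
Hypothesis tree_refl : forall x, le x x.
Hypothesis tree_antisym : forall x y, le x y -> le y x -> x = y.
Hypothesis tree_trans : forall x y z, le x y -> le y z -> le x z.
Hypothesis tree_wo : forall t, well_ordered_subset le (fun s => lt le s t).

Local Notation lt := (Defs.lt le).
Local Notation succ := (immediate_successor le).

Lemma lt_le x y : lt x y -> le x y.
Proof. intros [xy _]; exact xy. Qed.

Lemma lt_irrefl x : ~ lt x x.
Proof. intros [_ xx]; auto. Qed.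

Lemma le_lt_trans x y z : le x y -> lt y z -> lt x z.
Proof. intros xy [yz nyz]; split; eauto; intros ->; auto. Qed.

Lemma lt_le_trans x y z : lt x y -> le y z -> lt x z.
Proof. intros [xy nxy] yz; split; eauto; intros ->; auto. Qed.

Lemma lt_not_ge x y : lt x y -> ~ le y x.
Proof. intros [xy nxy] yx; auto. Qed.

Lemma le_eq_or_lt x y : le x y -> x = y \/ lt x y.
Proof. intros xy; destruct (classic (x = y)); [left|right; split]; auto. Qed.

Lemma comparable_below a b x : le a x -> le b x -> le a b \/ le b a.
Proof.
  intros ax bx.
  destruct (le_eq_or_lt ax) as [->|ax']; [auto|].
  destruct (le_eq_or_lt bx) as [->|bx']; [auto|].
  apply (proj1 (tree_wo x)); auto.
Qed.

Lemma bounded_least (P : T -> Prop) x :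
  (forall w, P w -> le w x) -> (exists w, P w) ->
  exists m, P m /\ forall w, P w -> le m w.
Proof.
  intros Px [w Pw].
  destruct (classic (exists v, P v /\ lt v x)) as [[v [Pv vx]]|below_x].
  - destruct (proj2 (tree_wo x) (fun v => P v /\ lt v x)) as [m [[Pm mx] Hm]];
      [tauto|eauto|].
    exists m; split; [exact Pm|]; intros u Pu.
    destruct (le_eq_or_lt (Px u Pu)) as [->|ux]; [apply lt_le; exact mx|auto].
  - assert (eq_x : forall u, P u -> u = x).
    { intros u Pu; destruct (le_eq_or_lt (Px u Pu)) as [->|ux]; [auto|].
      exfalso; eauto. }
    exists x; split; [rewrite <- (eq_x w Pw); exact Pw|].
    intros u Pu; rewrite (eq_x u Pu); apply tree_refl.
Qed.

Lemma immediate_successor_below x y : lt x y -> exists c, succ x c /\ le c y.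
Proof.
  intros xy.
  destruct (@bounded_least (fun w => lt x w /\ le w y) y) as [c [[xc cy] Hc]];
    [tauto|eauto|].
  exists c; split; [split; [exact xc|]|exact cy].
  intros [z [xz zc]].
  apply (lt_not_ge zc); apply Hc; split; [exact xz|].
  apply lt_le; eapply lt_le_trans; eauto.
Qed.

Lemma lt_immediate_successor p a : succ p a -> forall z, lt z a <-> le z p.
Proof.
  intros [pa p_adj] z; split.
  - intros za.
    destruct (comparable_below (lt_le za) (lt_le pa)) as [zp|pz]; [exact zp|].
    destruct (le_eq_or_lt pz) as [->|pz']; [apply tree_refl|].
    exfalso; apply p_adj; eauto.
  - intros zp; eapply le_lt_trans; eauto.
Qed.

Lemma immediate_predecessor_unique p q a : succ p a -> succ q a -> p = q.
Proof.
  intros pa qa.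
  apply tree_antisym.
  - apply (lt_immediate_successor qa), (lt_immediate_successor pa), tree_refl.
  - apply (lt_immediate_successor pa), (lt_immediate_successor qa), tree_refl.
Qed.

Definition siblings a b := a <> b /\ forall z, lt z a <-> lt z b.

Lemma siblings_sym a b : siblings a b -> siblings b a.
Proof. intros [ab Hab]; split; [auto|]; intros z; rewrite Hab; tauto. Qed.

Lemma siblings_immediate_successor p a b : siblings a b -> succ p a -> succ p b.
Proof.
  intros [_ Hab] pa; split.
  - apply Hab, (lt_immediate_successor pa), tree_refl.
  - intros [z [pz zb]]; apply Hab, (lt_immediate_successor pa) in zb.
    exact (lt_not_ge pz zb).
Qed.

Lemma immediate_successors_siblings p a b :
  succ p a -> succ p b -> a <> b -> siblings a b.
Proof.
  intros pa pb ab; split; [exact ab|]; intros z.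
  rewrite (lt_immediate_successor pa), (lt_immediate_successor pb); tauto.
Qed.

Lemma siblings_no_common_upper a b x : siblings a b -> le a x -> le b x -> False.
Proof.
  intros [ab Hab] ax bx.
  destruct (comparable_below ax bx) as [a_b|b_a].
  - destruct (le_eq_or_lt a_b) as [|a_b']; [auto|].
    apply Hab in a_b'; exact (lt_irrefl a_b').
  - destruct (le_eq_or_lt b_a) as [|b_a']; [auto|].
    apply Hab in b_a'; exact (lt_irrefl b_a').
Qed.

Lemma first_divergence x y a :
  le a x -> ~ le a y -> (forall z, le z x -> ~ le z y -> le a z) ->
  forall z, lt z a <-> le z x /\ le z y.
Proof.
  intros ax nay a_least z; split.
  - intros za; split; [apply lt_le; eapply lt_le_trans; eauto|].
    apply NNPP; intros nzy.
    exact (lt_not_ge za (a_least z (tree_trans (lt_le za) ax) nzy)).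
  - intros [zx zy].
    destruct (comparable_below zx ax) as [z_a|a_z].
    + destruct (le_eq_or_lt z_a) as [<-|]; [contradiction|assumption].
    + exfalso; apply nay; eauto.
Qed.

Section BranchOrder.
Variable R : T -> T -> Prop.
Hypothesis R_linear : strict_linear_order R.
Variable idx : T -> T -> nat.
Hypothesis idx_inj : forall p a b, succ p a -> succ p b -> idx p a = idx p b -> a = b.

(* Children of p are listed by decreasing index, so they accumulate at p from
   the right; siblings without an immediate predecessor are ordered by R. *)
Definition sib_lt a b : Prop :=
  siblings a b /\
  ((exists p, succ p a /\ succ p b /\ idx p b < idx p a) \/
   ((~ exists p, succ p a) /\ R a b)).

Lemma sib_lt_lt_l a b z : sib_lt a b -> lt z a -> lt z b.
Proof. intros [[_ Hab] _]; apply Hab. Qed.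

Lemma sib_lt_lt_r a b z : sib_lt a b -> lt z b -> lt z a.
Proof. intros [[_ Hab] _]; apply Hab. Qed.

Lemma sib_lt_asym a b : sib_lt a b -> sib_lt b a -> False.
Proof.
  intros [_ [[p [pa [pb ba]]]|[na Rab]]] [_ [[q [qb [qa ab]]]|[nb Rba]]].
  - rewrite (immediate_predecessor_unique pa qa) in ba; lia.
  - apply nb; eauto.
  - apply na; eauto.
  - destruct R_linear as [Rirr [Rtrans _]]; apply (Rirr a); eauto.
Qed.

Lemma sib_lt_trans a b c : sib_lt a b -> sib_lt b c -> sib_lt a c.
Proof.
  intros ab bc.
  split.
  { split; [intros <-; exact (sib_lt_asym ab bc)|].
    intros z; split; intros Hz.
    - exact (sib_lt_lt_l bc (sib_lt_lt_l ab Hz)).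
    - exact (sib_lt_lt_r ab (sib_lt_lt_r bc Hz)). }
  destruct ab as [ab [[p [pa [pb ba]]]|[na Rab]]], bc as [bc [[q [qb [qc cb]]]|[nb Rbc]]].
  - rewrite <- (immediate_predecessor_unique pb qb) in *.
    left; exists p; split; [exact pa|split; [exact qc|lia]].
  - exfalso; apply nb; eauto.
  - exfalso; apply na; exists q.
    apply siblings_immediate_successor with b; [apply siblings_sym|]; auto.
  - right; split; [exact na|]; destruct R_linear as [_ [Rtrans _]]; eauto.
Qed.

Lemma sib_lt_total a b : siblings a b -> sib_lt a b \/ sib_lt b a.
Proof.
  intros ab; pose proof (siblings_sym ab) as ba.
  destruct (classic (exists p, succ p a)) as [[p pa]|na].
  - pose proof (siblings_immediate_successor ab pa) as pb.
    destruct (lt_eq_lt_dec (idx p a) (idx p b)) as [[lt_ab|eq_ab]|lt_ba].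
    + right; split; [exact ba|]; left; exists p; auto.
    + exfalso; apply (proj1 ab); eapply idx_inj; eauto.
    + left; split; [exact ab|]; left; exists p; auto.
  - assert (nb : ~ exists p, succ p b).
    { intros [p pb]; apply na; exists p; eapply siblings_immediate_successor; eauto. }
    destruct R_linear as [_ [_ Rtotal]].
    destruct (Rtotal a b) as [Rab|[<-|Rba]].
    + left; split; [exact ab|]; right; auto.
    + exfalso; apply (proj1 ab); reflexivity.
    + right; split; [exact ba|]; right; auto.
Qed.

Lemma sib_lt_immediate_successors p a b :
  succ p a -> succ p b -> idx p b < idx p a -> sib_lt a b.
Proof.
  intros pa pb ba; split; [|left; exists p; auto].
  apply immediate_successors_siblings with p; auto.
  intros <-; lia.
Qed.

Definition left_of x y := exists a b, le a x /\ le b y /\ sib_lt a b.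

Lemma left_of_no_common_upper x y z : left_of x y -> le x z -> le y z -> False.
Proof.
  intros [a [b [ax [b_y [ab _]]]]] xz yz.
  exact (siblings_no_common_upper ab (tree_trans ax xz) (tree_trans b_y yz)).
Qed.

Lemma left_of_trans x y z : left_of x y -> left_of y z -> left_of x z.
Proof.
  intros [a [b [ax [b_y ab]]]] [b' [c [b'_y [cz b'c]]]].
  destruct (comparable_below b_y b'_y) as [bb'|b'b].
  - destruct (le_eq_or_lt bb') as [<-|bb''].
    + exists a, c; split; [exact ax|split; [exact cz|exact (sib_lt_trans ab b'c)]].
    + exists a, b; split; [exact ax|split; [|exact ab]].
      exact (tree_trans (lt_le (sib_lt_lt_l b'c bb'')) cz).
  - destruct (le_eq_or_lt b'b) as [->|b'b''].
    + exists a, c; split; [exact ax|split; [exact cz|exact (sib_lt_trans ab b'c)]].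
    + exists b', c; split; [|split; [exact cz|exact b'c]].
      exact (tree_trans (lt_le (sib_lt_lt_r ab b'b'')) ax).
Qed.

Lemma left_of_mono_l x x' y : left_of x y -> le x x' -> left_of x' y.
Proof. intros [a [b [ax [b_y ab]]]] xx'; exists a, b; eauto. Qed.

Lemma left_of_mono_r x y y' : left_of x y -> le y y' -> left_of x y'.
Proof. intros [a [b [ax [b_y ab]]]] yy'; exists a, b; eauto. Qed.

Lemma left_of_lower_l x y z : left_of x y -> le z x -> left_of z y \/ lt z y.
Proof.
  intros [a [b [ax [b_y ab]]]] zx.
  destruct (comparable_below ax zx) as [az|za].
  - left; exists a, b; auto.
  - destruct (le_eq_or_lt za) as [->|za']; [left; exists a, b; auto|].
    right; eapply lt_le_trans; [eapply sib_lt_lt_l|]; eauto.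
Qed.

Lemma left_of_lower_r x y z : left_of x y -> le z y -> left_of x z \/ lt z x.
Proof.
  intros [a [b [ax [b_y ab]]]] zy.
  destruct (comparable_below b_y zy) as [bz|zb].
  - left; exists a, b; auto.
  - destruct (le_eq_or_lt zb) as [->|zb']; [left; exists a, b; auto|].
    right; eapply lt_le_trans; [eapply sib_lt_lt_r|]; eauto.
Qed.

Lemma left_of_total x y : ~ le x y -> ~ le y x -> left_of x y \/ left_of y x.
Proof.
  intros nxy nyx.
  destruct (@bounded_least (fun z => le z x /\ ~ le z y) x)
    as [a [[ax nay] a_least]]; [tauto|eauto|].
  destruct (@bounded_least (fun z => le z y /\ ~ le z x) y)
    as [b [[b_y nbx] b_least]]; [tauto|eauto|].
  assert (ab : siblings a b).
  { split; [intros ->; contradiction|]; intros z.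
    rewrite (first_divergence ax nay (fun w wx nwy => a_least w (conj wx nwy))),
      (first_divergence b_y nbx (fun w wy nwx => b_least w (conj wy nwx))).
    tauto. }
  destruct (sib_lt_total ab) as [a_b|b_a]; [left|right]; [exists a, b|exists b, a]; auto.
Qed.

(* (x, Lo) and (x, Hi) are the endpoints of the interval occupied by V_x,
   and (x, Mid) represents x itself. *)
Definition line := (T * tag)%type.

Definition line_lt (p q : line) : Prop :=
  (fst p = fst q /\ tag_lt (snd p) (snd q)) \/
  (lt (fst p) (fst q) /\ snd p <> Hi) \/
  (lt (fst q) (fst p) /\ snd q = Hi) \/
  left_of (fst p) (fst q).

Lemma line_lt_irrefl p : ~ line_lt p p.
Proof.
  intros [[_ ee]|[[xx _]|[[xx _]|xx]]].
  - exact (tag_lt_irrefl ee).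
  - exact (lt_irrefl xx).
  - exact (lt_irrefl xx).
  - exact (left_of_no_common_upper xx (tree_refl _) (tree_refl _)).
Qed.

Lemma line_lt_trans p q r : line_lt p q -> line_lt q r -> line_lt p r.
Proof.
  destruct p as [x e], q as [y f], r as [z g]; unfold line_lt; simpl.
  intros [[<- ef]|[[xy eH]|[[yx fH]|xy]]] [[<- fg]|[[yz fH']|[[zy gH]|yz]]];
    try subst f; try subst g.
  - left; split; [reflexivity|]; eapply tag_lt_trans; eauto.
  - right; left; split; [exact yz|]; intros ->; exact (Hi_not_tag_lt ef).
  - right; right; left; auto.
  - do 3 right; exact yz.
  - right; left; auto.
  - right; left; split; [eapply lt_le_trans; eauto using lt_le|exact eH].
  - destruct (classic (x = z)) as [<-|xz].
    + left; split; [reflexivity|apply tag_lt_Hi; exact eH].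
    + destruct (comparable_below (lt_le xy) (lt_le zy)) as [xz'|zx'].
      * right; left; split; [split|]; auto.
      * right; right; left; split; [split|]; auto.
  - destruct (left_of_lower_l yz (lt_le xy)) as [xz|xz]; [do 3 right|right; left]; auto.
  - exfalso; exact (Hi_not_tag_lt fg).
  - exfalso; auto.
  - right; right; left; split; [eapply lt_le_trans; eauto using lt_le|reflexivity].
  - do 3 right; eapply left_of_mono_l; eauto using lt_le.
  - do 3 right; exact xy.
  - do 3 right; eapply left_of_mono_r; eauto using lt_le.
  - destruct (left_of_lower_r xy (lt_le zy)) as [xz|zx]; [do 3 right|right; right; left]; auto.
  - do 3 right; eapply left_of_trans; eauto.
Qed.

Lemma line_lt_total p q : line_lt p q \/ p = q \/ line_lt q p.
Proof.
  destruct p as [x e], q as [y f]; unfold line_lt; simpl.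
  destruct (classic (x = y)) as [<-|nxy].
  - destruct (tag_lt_total e f) as [ef|[<-|fe]]; auto.
  - destruct (classic (le x y)) as [xy|nxy'].
    + assert (xy' : lt x y) by (split; auto).
      destruct (classic (e = Hi)); [right; right|left]; auto.
    + destruct (classic (le y x)) as [yx|nyx].
      * assert (yx' : lt y x) by (split; auto).
        destruct (classic (f = Hi)); [left|right; right]; auto.
      * destruct (left_of_total nxy' nyx); [left|right; right]; auto.
Qed.

Lemma line_lt_linear : strict_linear_order line_lt.
Proof. split; [exact line_lt_irrefl|split; [exact line_lt_trans|exact line_lt_total]]. Qed.

Lemma line_lt_tag x e f : tag_lt e f -> line_lt (x, e) (x, f).
Proof. intros ef; left; auto. Qed.

Lemma line_lt_tag_inv x e f : line_lt (x, e) (x, f) -> tag_lt e f.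
Proof.
  intros [[_ ef]|[[xx _]|[[xx _]|xx]]]; simpl in *; [exact ef|..]; exfalso.
  - exact (lt_irrefl xx).
  - exact (lt_irrefl xx).
  - exact (left_of_no_common_upper xx (tree_refl _) (tree_refl _)).
Qed.

Lemma line_lt_Lo_Mid x y : le x y -> line_lt (x, Lo) (y, Mid).
Proof.
  intros xy; destruct (le_eq_or_lt xy) as [<-|xy'].
  - apply line_lt_tag; unfold tag_lt; simpl; lia.
  - right; left; simpl; split; [exact xy'|discriminate].
Qed.

Lemma line_lt_Mid_Hi x y : le x y -> line_lt (y, Mid) (x, Hi).
Proof.
  intros xy; destruct (le_eq_or_lt xy) as [<-|xy'].
  - apply line_lt_tag; unfold tag_lt; simpl; lia.
  - right; right; left; simpl; auto.
Qed.

Lemma between_Lo_Hi_le x y f :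
  line_lt (x, Lo) (y, f) -> line_lt (y, f) (x, Hi) -> le x y.
Proof.
  unfold line_lt; simpl.
  intros [[<- _]|[[xy _]|[[yx ->]|xy]]] H; [apply tree_refl|apply lt_le; exact xy|..];
    exfalso; destruct H as [[-> _]|[[yx' nH]|[[xy' _]|yx']]].
  - exact (lt_irrefl yx).
  - exact (nH eq_refl).
  - exact (lt_not_ge yx (lt_le xy')).
  - exact (left_of_no_common_upper yx' (lt_le yx) (tree_refl _)).
  - exact (left_of_no_common_upper xy (tree_refl _) (tree_refl _)).
  - exact (left_of_no_common_upper xy (tree_refl _) (lt_le yx')).
  - exact (left_of_no_common_upper xy (lt_le xy') (tree_refl _)).
  - exact (left_of_no_common_upper (left_of_trans xy yx') (tree_refl _) (tree_refl _)).
Qed.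

Lemma Lo_Mid_adjacent x : ~ exists q, line_lt (x, Lo) q /\ line_lt q (x, Mid).
Proof.
  intros [[y f] [xq qx]].
  assert (xy : le x y).
  { apply between_Lo_Hi_le with f; [exact xq|].
    exact (line_lt_trans qx (line_lt_Mid_Hi (tree_refl x))). }
  destruct (le_eq_or_lt xy) as [<-|xy'].
  - pose proof (line_lt_tag_inv xq); pose proof (line_lt_tag_inv qx).
    destruct f; unfold tag_lt in *; simpl in *; lia.
  - destruct qx as [[yx _]|[[yx _]|[[_ ?]|yx]]]; simpl in *.
    + subst; exact (lt_irrefl xy').
    + exact (lt_not_ge yx xy).
    + discriminate.
    + exact (left_of_no_common_upper yx (tree_refl _) xy).
Qed.

Definition mid_nbhd x (S : T -> Prop) : Prop :=
  right_nbhd line_lt (x, Lo) (x, Mid) (fun q => forall y, q = (y, Mid) -> S y).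

Lemma subbasic_mid_nbhd x W : fine_wedge_subbasic le W -> W x -> mid_nbhd x W.
Proof.
  pose proof (line_lt_Mid_Hi (tree_refl x)) as x_Hi.
  intros [t [HW|HW]] Wx; apply HW in Wx; unfold wedge in *.
  - exists (x, Hi); split; [exact x_Hi|].
    intros q xq qx y ->; apply HW.
    exact (tree_trans Wx (between_Lo_Hi_le xq qx)).
  - destruct (classic (le x t)) as [xt|nxt].
    + exists (t, Lo); split.
      * right; left; simpl; split; [split; [exact xt|intros <-; auto]|discriminate].
      * intros q _ qt y ->; apply HW; intros ty.
        apply (line_lt_irrefl (p := (t, Lo))), line_lt_trans with (y, Mid);
          [exact (line_lt_Lo_Mid ty)|exact qt].
    + exists (x, Hi); split; [exact x_Hi|].
      intros q xq qx y ->; apply HW; intros ty.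
      destruct (comparable_below ty (between_Lo_Hi_le xq qx)); auto.
Qed.

Lemma fine_wedge_open_mid_nbhd U x : fine_wedge_open le U -> U x -> mid_nbhd x U.
Proof.
  intros HU Ux.
  apply (@subbasic_nbhd_in_filter _ (fine_wedge_subbasic le) x (mid_nbhd x)).
  - apply right_nbhd_mono with (fun _ => True); [auto|].
    apply right_nbhdT with (x, Hi); exact (line_lt_Mid_Hi (tree_refl x)).
  - intros S S' SS'; apply right_nbhd_mono; intros q Sq y qy; apply SS', Sq, qy.
  - intros S S' NS NS'.
    apply right_nbhd_mono with (2 := right_nbhdI line_lt_linear NS NS').
    intros q [Sq S'q] y qy; split; [apply Sq|apply S'q]; exact qy.
  - exact (@subbasic_mid_nbhd x).
  - exact (HU x Ux).
Qed.

Lemma wedge_subbasic_nbhd x : subbasic_nbhd (fine_wedge_subbasic le) x (wedge le x).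
Proof.
  apply subbasic_nbhd_subbasic; [exists x; left; tauto|apply tree_refl].
Qed.

Lemma not_wedge_subbasic_nbhd x c :
  lt x c -> subbasic_nbhd (fine_wedge_subbasic le) x (fun y => ~ le c y).
Proof.
  intros xc; apply subbasic_nbhd_subbasic; [exists c; right; unfold wedge; tauto|].
  exact (lt_not_ge xc).
Qed.

Lemma first_children_nbhd x k :
  subbasic_nbhd (fine_wedge_subbasic le) x
    (fun y => forall c, succ x c -> idx x c < k -> ~ le c y).
Proof.
  induction k as [|k IH].
  - apply subbasic_nbhd_mono with (fun _ => True); [intros; lia|apply subbasic_nbhdT].
  - destruct (classic (exists c, succ x c /\ idx x c = k)) as [[c [xc ck]]|no_k].
    + apply subbasic_nbhd_mono
        with (2 := subbasic_nbhdI IH (not_wedge_subbasic_nbhd (proj1 xc))).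
      intros y [Hy ncy] c' xc' c'k.
      destruct (Nat.eq_dec (idx x c') k) as [c'k'|c'k'].
      * rewrite (idx_inj xc' xc (eq_trans c'k' (eq_sym ck))); exact ncy.
      * apply Hy; [exact xc'|lia].
    + apply subbasic_nbhd_mono with (2 := IH).
      intros y Hy c xc ck.
      destruct (Nat.eq_dec (idx x c) k); [exfalso; eauto|apply Hy; [exact xc|lia]].
Qed.

Lemma interval_subbasic_nbhd x b :
  line_lt (x, Mid) b ->
  subbasic_nbhd (fine_wedge_subbasic le) x
    (fun y => line_lt (x, Lo) (y, Mid) /\ line_lt (y, Mid) b).
Proof.
  intros xb.
  destruct (classic (line_lt b (x, Hi))) as [bx|nbx].
  2: { apply subbasic_nbhd_mono with (2 := wedge_subbasic_nbhd x).
       intros y xy; split; [exact (line_lt_Lo_Mid xy)|].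
       destruct (line_lt_total b (x, Hi)) as [bHi|[->|Hib]].
       - contradiction.
       - exact (line_lt_Mid_Hi xy).
       - exact (line_lt_trans (line_lt_Mid_Hi xy) Hib). }
  destruct b as [z g].
  assert (xz : lt x z).
  { assert (xLz : line_lt (x, Lo) (z, g)).
    { exact (line_lt_trans (line_lt_Lo_Mid (tree_refl x)) xb). }
    split; [exact (between_Lo_Hi_le xLz bx)|intros <-].
    pose proof (line_lt_tag_inv xb); pose proof (line_lt_tag_inv bx).
    destruct g; unfold tag_lt in *; simpl in *; lia. }
  destruct (immediate_successor_below xz) as [s [xs sz]].
  apply subbasic_nbhd_mono with (2 := subbasic_nbhdI (wedge_subbasic_nbhd x)
    (subbasic_nbhdI (not_wedge_subbasic_nbhd (proj1 xs)) (first_children_nbhd x (idx x s)))).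
  intros y [xy [nsy Hy]]; split; [exact (line_lt_Lo_Mid xy)|].
  destruct (le_eq_or_lt xy) as [<-|xy']; [exact xb|].
  destruct (immediate_successor_below xy') as [c [xc cy]].
  assert (cs : c <> s) by (intros ->; contradiction).
  assert (idx x c <> idx x s) by (intros e; exact (cs (idx_inj xc xs e))).
  assert (~ idx x c < idx x s) by (intros cs'; exact (Hy c xc cs' cy)).
  do 3 right; simpl; exists c, s; split; [exact cy|split; [exact sz|]].
  apply sib_lt_immediate_successors with x; [exact xc|exact xs|lia].
Qed.

Lemma fine_wedge_embedding :
  embedding (fine_wedge_open le) (order_open line_lt) (fun x => (x, Mid)).
Proof.
  split; [intros x y e; injection e; auto|]; intros U; split.
  - intros HU.
    exists (fun q => exists a b, line_lt a q /\ line_lt q b /\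
              forall y, line_lt a (y, Mid) -> line_lt (y, Mid) b -> U y).
    split.
    + apply order_open_of_intervals.
      intros q [a [b [aq [qb Hab]]]]; exists a, b; split; [exact aq|split; [exact qb|]].
      intros r ar rb; exists a, b; auto.
    + intros x; split.
      * intros Ux; destruct (@fine_wedge_open_mid_nbhd U x HU Ux) as [b [xb Hb]].
        exists (x, Lo), b; split; [exact (line_lt_Lo_Mid (tree_refl x))|].
        split; [exact xb|]; intros y xy yb; exact (Hb (y, Mid) xy yb y eq_refl).
      * intros [a [b [ax [xb Hab]]]]; exact (Hab x ax xb).
  - intros [V [HV UV]] x Ux; apply UV in Ux.
    destruct (order_open_right_nbhd line_lt_linear (@Lo_Mid_adjacent x)
                (line_lt_Mid_Hi (tree_refl x)) HV Ux)
      as [b [xb Hb]].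
    apply subbasic_nbhd_mono with (2 := interval_subbasic_nbhd xb).
    intros y [xy yb]; apply UV, Hb; assumption.
Qed.

End BranchOrder.
End Tree.

Theorem theorem3p12 (T : Type) (le : T -> T -> Prop) :
  is_tree le ->
  (forall x : T, countable_set (immediate_successor le x)) ->
  suborderable (fine_wedge_open le).
Proof.
  intros [[le_refl [le_antisym le_trans]] preds_wo] succ_countable.
  destruct (exists_strict_linear_order T) as [R R_linear].
  destruct (choice _ succ_countable) as [idx idx_inj].
  exists (line T), (line_lt le R idx), (fun x => (x, Mid)).
  split; [apply line_lt_linear|apply fine_wedge_embedding]; assumption.
Qed.
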